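(* Under the standing assumptions, let $\{x_i\}_{i=1}^N$ be a solution of the delayed Hegselmann–Krause system. Then for every $v\in\mathbb{R}^d$, every $T\ge 0$, every $i=1,\dots,N$ and every $t\ge T-\bar\tau$, $$\min_{j=1,\dots,N}\min_{s\in[T-\bar\tau,T]}\langle x_j(s),v\rangle\le\langle x_i(t),v\rangle\le\max_{j=1,\dots,N}\max_{s\in[T-\bar\tau,T]}\langle x_j(s),v\rangle.$$
   Context: Standing assumptions: $N\ge 2$, $d\ge 1$, $\bar\tau>0$; $\tau:[0,\infty)\to[0,\bar\tau]$ continuous; $\psi:\mathbb{R}^d\times\mathbb{R}^d\to\mathbb{R}$ continuous, bounded and strictly positive, $K:=\|\psi\|_\infty$; initial data $x_i^0:[-\bar\tau,0]\to\mathbb{R}^d$ continuous. The delayed Hegselmann–Krause system is $$\frac{d}{dt}x_i(t)=\frac{1}{N-1}\sum_{j\ne i}\psi\big(x_i(t),x_j(t-\tau(t))\big)\big(x_j(t-\tau(t))-x_i(t)\big),\quad t>0,$$ with $x_i=x_i^0$ on $[-\bar\tau,0]$; a solution means continuous $x_i:[-\bar\tau,\infty)\to\mathbb{R}^d$, differentiable on $(0,\infty)$, satisfying this. $\langle\cdot,\cdot\rangle$ is the Euclidean inner product. *)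

From HB Require Import structures.
From mathcomp Require Import all_boot all_order all_algebra.
From mathcomp Require Import all_classical all_reals all_analysis.
Set Implicit Arguments. Unset Strict Implicit. Unset Printing Implicit Defensive.
Import Order.TTheory GRing.Theory Num.Theory.
Import numFieldNormedType.Exports.
Local Open Scope ring_scope.
Local Open Scope classical_set_scope.

Definition dotv {R : realType} {d : nat} (a b : 'rV[R]_d) : R :=
  \sum_(k < d) a ord0 k * b ord0 k.

Definition hk_rhs {R : realType} {N d : nat} (psi : 'rV[R]_d -> 'rV[R]_d -> R)
  (tau : R -> R) (x : 'I_N -> R -> 'rV[R]_d) (i : 'I_N) (t : R) : 'rV[R]_d :=
  (N.-1)%:R^-1 *: \sum_(j < N | j != i)
     (psi (x i t) (x j (t - tau t)) *: (x j (t - tau t) - x i t)).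

Definition is_hk_solution {R : realType} {N d : nat} (taubar : R)
  (psi : 'rV[R]_d -> 'rV[R]_d -> R) (tau : R -> R)
  (x0 x : 'I_N -> R -> 'rV[R]_d) : Prop :=
  (forall i : 'I_N, {within `[- taubar, +oo[, continuous (x i)}) /\
  (forall (i : 'I_N) (s : R), - taubar <= s <= 0 -> x i s = x0 i s) /\
  (forall (i : 'I_N) (t : R), 0 < t -> is_derive t (1 : R) (x i) (hk_rhs psi tau x i t)).

From HB Require Import structures.
From mathcomp Require Import all_boot all_order all_algebra.
From mathcomp Require Import all_classical all_reals all_analysis.
From mathcomp Require Import ring lra.
Import Order.TTheory GRing.Theory Num.Theory.
Import numFieldNormedType.Exports.
Local Open Scope ring_scope.
Local Open Scope classical_set_scope.

(* Fix v and put f_j(s) = <x_j(s), v>.  The HK right-hand side is a positive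
   combination of the differences x_j(t - tau t) - x_i(t), so at a time t where
   f_i(t) dominates every f_j on [T - taubar, t], the derivative of f_i is
   nonpositive.  Hence no f_j can exceed its maximum M over the window
   [T - taubar, T]: at a first exceedance, made a strict left maximum by
   subtracting a small slope, the derivative would have to be positive.  The
   lower bound is the upper bound for -v. *)

Section dotv.
Context {R : realType} {d : nat}.
Implicit Types (a b v : 'rV[R]_d).

Lemma dotvZl k a v : dotv (k *: a) v = k * dotv a v.
Proof.
by rewrite /dotv mulr_sumr; apply: eq_bigr => j _; rewrite mxE mulrA.
Qed.

Lemma dotvBl a b v : dotv (a - b) v = dotv a v - dotv b v.
Proof. by rewrite /dotv -sumrB; apply: eq_bigr => j _; rewrite !mxE mulrBl. Qed.

Lemma dotvNr a v : dotv a (- v) = - dotv a v.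
Proof. by rewrite /dotv -sumrN; apply: eq_bigr => j _; rewrite !mxE mulrN. Qed.

Lemma dotv_suml (I : finType) (P : pred I) (F : I -> 'rV[R]_d) v :
  dotv (\sum_(i | P i) F i) v = \sum_(i | P i) dotv (F i) v.
Proof.
by rewrite /dotv exchange_big; apply: eq_bigr => j _; rewrite summxE mulr_suml.
Qed.

Lemma dotvl_continuous v : continuous (fun a => dotv a v).
Proof.
apply: (@continuous_big _ _ +%R 0) => [|j _ a]; first exact: add_continuous.
by apply: continuousM; [exact: coord_continuous | exact: cst_continuous].
Qed.

Lemma is_derive_dotv (y : R -> 'rV[R]_d) (t : R) (D v : 'rV[R]_d) :
  is_derive t 1 y D -> is_derive t 1 (fun s => dotv (y s) v) (dotv D v).
Proof.
move=> [dy <-].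
suff quot : (fun h : R => h^-1 *: (dotv (y (h%:A + t)) v - dotv (y t) v))
    @ 0^' --> dotv ('D_1 y t) v.
  by split; [apply/cvg_ex; exists (dotv ('D_1 y t) v) | apply: cvg_lim].
apply: cvg_trans (cvg_comp _ _ dy (dotvl_continuous v ('D_1 y t))).
by apply: near_eq_cvg; near=> h; rewrite /= dotvZl dotvBl.
Unshelve. all: by end_near.
Qed.

Lemma image2_opp_dotv {I J : Type} (A : set I) (B : set J)
    (y : I -> J -> 'rV[R]_d) v :
  -%R @` [set dotv (y i j) v | i in A & j in B] =
  [set dotv (y i j) (- v) | i in A & j in B].
Proof.
apply/seteqP; split=> z /=.
  by move=> [_ [i Ai [j Bj <-]] <-]; exists i => //; exists j; rewrite ?dotvNr.
move=> [i Ai [j Bj <-]]; exists (dotv (y i j) v); last by rewrite dotvNr.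
by exists i => //; exists j.
Qed.

End dotv.

Section running_max.
Context {R : realType}.

Lemma is_derive_left_max_ge0 {f : R -> R} {a c l : R} :
  a < c -> (forall s, a <= s <= c -> f s <= f c) -> is_derive c 1 f l -> 0 <= l.
Proof.
move=> ac cmax [df <-].
rewrite ['D_1 f c]cvg_at_leftE; last exact: df.
apply: limr_ge.
  rewrite -(cvg_at_leftE (fun h => h^-1 *: ((f \o shift c) _ - f c))) //.
  apply: cvg_trans df; apply: cvg_app.
  move=> A [e e0 Ae]; exists e => // h he h0; apply: Ae => //.
  exact/ltr0_neq0.
near=> h; apply: mulr_le0.
  by rewrite invr_le0; apply: ltW; near: h; exists 1 => /=.
rewrite subr_le0 [_%:A]mulr1; apply: cmax; near: h.
exists (c - a); first by rewrite /= subr_gt0.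
move=> h; rewrite /= distrC subr0 => /ltr_normlP[].
by rewrite ltrBrDl ltrBlDl => /ltW -> _ /ltW; rewrite gerDr.
Unshelve. all: by end_near.
Qed.

Lemma EVT_max_family {I : finType} (i0 : I) {f : I -> R -> R} {a b : R} :
  a <= b -> (forall j, {within `[a, b], continuous (f j)}) ->
  exists k c, a <= c <= b /\ forall j s, a <= s <= b -> f j s <= f k c.
Proof.
move=> ab fc.
have /boolp.choice[c cmax] : forall j, exists c, a <= c <= b /\
    forall s, a <= s <= b -> f j s <= f j c.
  move=> j; have [c cab cmax] := EVT_max ab (fc j).
  by exists c; split=> [|s sab]; [move: cab | apply: cmax]; rewrite in_itv.
have [k _ kmax] := @arg_maxP _ _ _ i0 xpredT (fun j => f j (c j)) isT.
exists k, (c k); split=> [|j s sab]; first exact: (cmax k).1.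
exact: le_trans ((cmax j).2 s sab) (kmax j isT).
Qed.

Lemma upper_bound_propagates {I : finType} {f : I -> R -> R} {a T M : R} :
  a <= T -> (forall j, {within `[a, +oo[, continuous (f j)}) ->
  (forall j s, a <= s <= T -> f j s <= M) ->
  (forall k c, T < c -> (forall j u, a <= u <= c -> f j u <= f k c) ->
     exists2 D, is_derive c 1 (f k) D & D <= 0) ->
  forall i t, a <= t -> f i t <= M.
Proof.
move=> aT fc f_init f_record i t at_.
have [tT|Tt] := leP t T; first by apply: f_init; rewrite at_.
rewrite leNgt; apply/negP => Mf.
pose e := (f i t - M) / (2 * (t - T)).
have e0 : 0 < e by apply: divr_gt0; lra.
pose g s := e * (s - T).
pose phi j s := f j s - g s.
have phic j : {within `[T, t], continuous (phi j)}.
  have sub : `[T, t] `<=` `[a, +oo[.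
    by move=> u /=; rewrite !in_itv /= andbT => /andP[+ _]; apply: le_trans.
  move=> s; apply: continuousB; first exact: continuous_subspaceW sub (fc j) s.
  apply: continuous_subspaceT => u; apply: cvgM; first exact: cvg_cst.
  by apply: cvgB; [exact: cvg_id | exact: cvg_cst].
have [k [c [/andP[Tc ct] cmax]]] := EVT_max_family i (ltW Tt) phic.
have Mphi : M < phi k c.
  have : phi i t <= phi k c by apply: cmax; rewrite lexx (ltW Tt).
  suff -> : phi i t = (f i t + M) / 2 by lra.
  by rewrite /phi /g /e; field; rewrite subr_eq0 gt_eqF.
have {}Tc : T < c.
  rewrite lt_neqAle Tc andbT; apply/eqP => eqTc.
  have : f k T <= M by apply: f_init; rewrite lexx aT.
  by move: Mphi; rewrite /phi /g -eqTc subrr mulr0 subr0; lra.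
have phiD : forall j u, T <= u <= c -> phi j u <= phi k c.
  by move=> j u /andP[Tu uc]; apply: cmax; rewrite Tu (le_trans uc ct).
have [D fD D0] : exists2 D, is_derive c 1 (f k) D & D <= 0.
  apply: f_record => // j u /andP[au uc].
  have ecT : 0 <= e * (c - T) by apply: mulr_ge0; lra.
  have [uT|Tu] := leP u T.
    by have := f_init j u; rewrite au uT /= /phi /g in Mphi *; lra.
  have : e * (u - T) <= e * (c - T) by apply: ler_wpM2l; lra.
  by have := phiD j u; rewrite (ltW Tu) uc /phi /g; lra.
have phikD : is_derive c 1 (phi k) (D - e *: (1 - 0)) by apply: is_deriveB.
have := is_derive_left_max_ge0 Tc (phiD k) phikD.
by rewrite subr0 [_ *: 1]mulr1; lra.
Qed.

End running_max.

Section hk_bounds.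
Context {R : realType} {N d : nat} {taubar : R} {tau : R -> R}
  {psi : 'rV[R]_d -> 'rV[R]_d -> R} {x : 'I_N -> R -> 'rV[R]_d}.
Hypothesis psi_gt0 : forall a b, 0 < psi a b.

Lemma dotv_hk_rhs_le0 (v : 'rV[R]_d) (k : 'I_N) (t : R) :
  (forall j, dotv (x j (t - tau t)) v <= dotv (x k t) v) ->
  dotv (hk_rhs psi tau x k t) v <= 0.
Proof.
move=> delayed_le; rewrite /hk_rhs dotvZl dotv_suml.
apply: mulr_ge0_le0; first by rewrite invr_ge0.
apply: sumr_le0 => j _; rewrite dotvZl dotvBl.
by apply: mulr_ge0_le0; [exact: ltW | rewrite subr_le0].
Qed.

Hypothesis tau_bound : forall t : R, 0 <= t -> 0 <= tau t <= taubar.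
Hypothesis x_cont : forall i, {within `[- taubar, +oo[, continuous (x i)}.
Hypothesis x_hk : forall (i : 'I_N) (t : R), 0 < t ->
  is_derive t 1 (x i) (hk_rhs psi tau x i t).

Lemma hk_dotv_le_sup (v : 'rV[R]_d) (T : R) (i : 'I_N) (t : R) :
  0 <= taubar -> 0 <= T -> T - taubar <= t ->
  dotv (x i t) v <=
    sup [set dotv (x j s) v | j in [set: 'I_N] & s in `[T - taubar, T]].
Proof.
move=> taubar0 T0 tT; set S := [set _ | _ in _ & _ in _].
pose f j s := dotv (x j s) v.
have window : T - taubar <= T by lra.
have fc j : {within `[T - taubar, +oo[, continuous (f j)}.
  have sub : `[T - taubar, +oo[ `<=` `[- taubar, +oo[.
    by move=> u /=; rewrite !in_itv /= !andbT; apply: le_trans; lra.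
  have xc := continuous_subspaceW sub (x_cont j).
  by move=> s; exact: continuous_comp (xc s) (dotvl_continuous v _).
have window_sub : `[T - taubar, T] `<=` `[T - taubar, +oo[.
  by move=> u /=; rewrite !in_itv /= andbT => /andP[].
have [k [c [_ cmax]]] :=
  EVT_max_family i window (fun j => continuous_subspaceW window_sub (fc j)).
have f_le_sup j s : T - taubar <= s <= T -> f j s <= sup S.
  move=> sT; apply: ub_le_sup;
    last by exists j => //; exists s; rewrite ?in_itv.
  exists (f k c) => _ [j' _ [s' s'T <-]].
  by apply: cmax; move: s'T; rewrite /= in_itv.
apply: (upper_bound_propagates window fc f_le_sup) => // k' c' Tc' record.
exists (dotv (hk_rhs psi tau x k' c') v).
  by apply/is_derive_dotv/x_hk; lra.
have /andP[tau0 tau_le] : 0 <= tau c' <= taubar by apply: tau_bound; lra.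
by apply: dotv_hk_rhs_le0 => j; apply: record; lra.
Qed.

End hk_bounds.

Theorem lemma2p1 (R : realType) (N d : nat) (taubar : R)
  (tau : R -> R) (psi : 'rV[R]_d -> 'rV[R]_d -> R)
  (x0 x : 'I_N -> R -> 'rV[R]_d) :
  (2 <= N)%N -> (1 <= d)%N -> 0 < taubar ->
  {within `[0, +oo[, continuous tau} ->
  (forall t, 0 <= t -> 0 <= tau t <= taubar) ->
  continuous (fun p : 'rV[R]_d * 'rV[R]_d => psi p.1 p.2) ->
  (exists K : R, forall a b, `|psi a b| <= K) ->
  (forall a b, 0 < psi a b) ->
  (forall i, {within `[- taubar, 0], continuous (x0 i)}) ->
  is_hk_solution taubar psi tau x0 x ->
  forall (v : 'rV[R]_d) (T : R), 0 <= T ->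
  forall (i : 'I_N) (t : R), T - taubar <= t ->
    let S := [set dotv (x j s) v | j in [set: 'I_N] & s in `[T - taubar, T]] in
    inf S <= dotv (x i t) v <= sup S.
Proof.
move=> _ _ taubar_gt0 _ tau_bound _ _ psi_gt0 _ [x_cont [_ x_hk]] v T T0 i t tT.
have le_sup w := hk_dotv_le_sup psi_gt0 tau_bound x_cont x_hk w T i t
  (ltW taubar_gt0) T0 tT.
apply/andP; split; last exact: le_sup.
by rewrite /inf lerNl image2_opp_dotv -dotvNr le_sup.
Qed.
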